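(* Let $g$ be a nontrivial isometry of a $\delta$-hyperbolic space $(X,d)$. Then: (i) $\ell(g)\le s(g)\le\ell(g)+\delta$; (ii) if $s(g)>\delta$, then for every $p\in\mathbb N^*$ and every $x\in X$, $d(x,g^{2^p}x)\ge d(x,gx)+(2^p-1)(s(g)-\delta)$; (iii) if $s(g)>3\delta$, then for every $x\in X$ the sequence $\big(d(x,g^nx)\big)_{n\in\mathbb N^*}$ is strictly increasing.
   Context: $s(g)=\inf_{x\in X}d(x,gx)$ and $\ell(g)=\lim_{k\to\infty}\frac1kd(x,g^kx)$. A $\delta$-hyperbolic space is a geodesic proper metric space all of whose geodesic triangles are $\delta$-thin: for a triangle with vertices $x,y,z$, map it onto the tripod with edges of lengths the Gromov products $(y|z)_x=\frac12(d(x,y)+d(x,z)-d(y,z))$ etc., isometrically on each side and vertices to ends; points with the same image are at distance $\le\delta$. *)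

From Stdlib Require Export Reals Lra.
Open Scope R_scope.

Definition is_metric {X : Type} (d : X -> X -> R) : Prop :=
  (forall x y, d x y = 0 <-> x = y) /\
  (forall x y, d x y = d y x) /\
  (forall x y z, d x z <= d x y + d y z).

Definition geodesic_seg {X : Type} (d : X -> X -> R) (a b : X) (gam : R -> X) : Prop :=
  gam 0 = a /\ gam (d a b) = b /\
  forall s t, 0 <= s <= d a b -> 0 <= t <= d a b -> d (gam s) (gam t) = Rabs (s - t).

Definition geodesic_space {X : Type} (d : X -> X -> R) : Prop :=
  forall a b, exists gam, geodesic_seg d a b gam.

Definition seq_cv {X : Type} (d : X -> X -> R) (u : nat -> X) (a : X) : Prop :=
  forall eps, 0 < eps -> exists N, forall n, (N <= n)%nat -> d (u n) a < eps.

(* proper: closed balls are compact (sequential compactness, equivalent for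
   metric spaces) *)
Definition proper_space {X : Type} (d : X -> X -> R) : Prop :=
  forall (c : X) (r : R) (u : nat -> X),
    (forall n, d c (u n) <= r) ->
    exists (phi : nat -> nat) (a : X),
      (forall n, (phi n < phi (S n))%nat) /\ d c a <= r /\ seq_cv d (fun n => u (phi n)) a.

Definition gromov {X : Type} (d : X -> X -> R) (x y z : X) : R :=
  (d x y + d x z - d y z) / 2.

(* delta-thin geodesic triangles, via the tripod map: two points on the sides
   issued from a common vertex x, at the same distance t <= (y|z)_x from x,
   have the same image in the tripod; they must be at distance <= delta.
   (Points on the same side never share a tripod image unless equal.)
   Quantifying over all vertices and all geodesic sides covers all three
   legs of every geodesic triangle. *)
Definition delta_thin {X : Type} (d : X -> X -> R) (delta : R) : Prop :=
  forall (x y z : X) (g1 g2 : R -> X),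
    geodesic_seg d x y g1 -> geodesic_seg d x z g2 ->
    forall t, 0 <= t <= gromov d x y z -> d (g1 t) (g2 t) <= delta.

Definition hyperbolic_space {X : Type} (d : X -> X -> R) (delta : R) : Prop :=
  is_metric d /\ geodesic_space d /\ proper_space d /\ delta_thin d delta.

Definition isometry {X : Type} (d : X -> X -> R) (g : X -> X) : Prop :=
  (forall x y, d (g x) (g y) = d x y) /\ (forall y, exists x, g x = y).

Definition is_glb (E : R -> Prop) (m : R) : Prop :=
  (forall r, E r -> m <= r) /\ (forall m', (forall r, E r -> m' <= r) -> m' <= m).

Definition displacements {X : Type} (d : X -> X -> R) (g : X -> X) : R -> Prop :=
  fun r => exists x, r = d x (g x).

Definition stable_length {X : Type} (d : X -> X -> R) (g : X -> X) (l : R) : Prop :=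
  forall x, Un_cv (fun k => d x (Nat.iter (S k) g x) / INR (S k)) l.

From Stdlib Require Import Reals Lra Lia Classical.
Open Scope R_scope.

(* Let every point be moved at least c > delta by an isometry h.  Thinness of
   the triangle (x, hx, h^2 x) at its vertex hx, whose two sides from hx are a
   geodesic [hx, x] and its image [hx, h^2 x], gives
   d(x, h^2 x) >= d(x, hx) + c - delta; iterating with h = g^(2^k) yields (ii),
   and along n = 2^p it yields l >= s - delta.  The orbit distances
   n |-> d(x, g^n x) are subadditive, so l exists and is their infimum rate
   (Fekete), whence l <= d(x, gx).  For (iii): if d(x, g^n x) < d(x, g^(n+1) x)
   but d(x, g^(n+1) x) >= d(x, g^(n+2) x), the midpoint m of [g^n x, g^(n+1) x]
   and gm are both delta-close to the same point of [g^(n+1) x, x], so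
   d(m, gm) <= 2 delta < s. *)

Definition dist_preserving {X : Type} (d : X -> X -> R) (h : X -> X) : Prop :=
  forall x y, d (h x) (h y) = d x y.

Lemma eventually_div_INR_S_lt (C eps : R) : 0 <= C -> 0 < eps ->
  exists N, forall n, (N <= n)%nat -> C / INR (S n) < eps.
Proof.
  intros HC Heps.
  destruct (INR_unbounded (C / eps)) as [N HN].
  exists N. intros n Hn.
  assert (HNn : INR N <= INR (S n)) by (apply le_INR; lia).
  assert (Hpos : 0 < INR (S n)) by (apply lt_0_INR; lia).
  assert (Hq : C / eps < INR (S n)) by lra.
  apply (Rmult_lt_reg_r (INR (S n))); [exact Hpos|].
  replace (C / INR (S n) * INR (S n)) with (C / eps * eps) by (field; lra).
  rewrite (Rmult_comm eps). apply Rmult_lt_compat_r; assumption.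
Qed.

Lemma seq_glb_exists (b : nat -> R) (c : R) : (forall k, c <= b k) ->
  exists m, is_glb (fun r => exists k, r = b k) m.
Proof.
  intros Hc.
  destruct (completeness (fun r => exists k, r = - b k)) as [M [HM1 HM2]].
  - exists (- c). intros r [k ->]. specialize (Hc k). lra.
  - exists (- b 0%nat), 0%nat. reflexivity.
  - exists (- M). split.
    + intros r [k ->]. assert (- b k <= M) by (apply HM1; exists k; reflexivity). lra.
    + intros m Hm. assert (M <= - m); [|lra].
      apply HM2. intros r [k ->].
      assert (m <= b k) by (apply Hm; exists k; reflexivity). lra.
Qed.

Section Subadditive.

Variable a : nat -> R.
Hypothesis a0 : a 0%nat = 0.
Hypothesis a_nonneg : forall n, 0 <= a n.
Hypothesis a_subadd : forall m n, a (m + n)%nat <= a m + a n.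

Lemma subadditive_mul_le (k p : nat) : a (k * p)%nat <= INR k * a p.
Proof.
  induction k as [|k IH]; [simpl; lra|].
  change (S k * p)%nat with (p + k * p)%nat. rewrite S_INR.
  specialize (a_subadd p (k * p)%nat). lra.
Qed.

Lemma subadditive_ratio_le (m n : nat) : (0 < m)%nat -> (0 < n)%nat ->
  a n / INR n <= a m / INR m + INR m * a 1%nat / INR n.
Proof.
  intros Hm Hn.
  assert (Hm' : 0 < INR m) by (apply lt_0_INR; exact Hm).
  assert (Hn' : 0 < INR n) by (apply lt_0_INR; exact Hn).
  pose proof (Nat.div_mod_eq n m) as Hdiv.
  pose proof (Nat.mod_upper_bound n m ltac:(lia)) as Hr.
  set (q := (n / m)%nat) in *. set (r := (n mod m)%nat) in *.
  assert (Han : a n <= INR q * a m + INR r * a 1%nat).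
  { rewrite Hdiv, Nat.mul_comm.
    pose proof (a_subadd (q * m) r). pose proof (subadditive_mul_le q m).
    pose proof (subadditive_mul_le r 1) as Hr1. rewrite Nat.mul_1_r in Hr1. lra. }
  assert (Hq : INR q * a m <= INR n * (a m / INR m)).
  { replace (INR q * a m) with (INR q * INR m * (a m / INR m)) by (field; lra).
    apply Rmult_le_compat_r; [apply Rle_mult_inv_pos; [apply a_nonneg | exact Hm']|].
    rewrite <- mult_INR. apply le_INR. lia. }
  assert (Hr1 : INR r * a 1%nat <= INR m * a 1%nat).
  { apply Rmult_le_compat_r; [apply a_nonneg | apply le_INR; lia]. }
  replace (a m / INR m + INR m * a 1%nat / INR n)
    with ((INR n * (a m / INR m) + INR m * a 1%nat) / INR n) by (field; lra).
  unfold Rdiv. apply Rmult_le_compat_r; [left; apply Rinv_0_lt_compat; exact Hn' | lra].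
Qed.

Lemma fekete_subadditive : exists l,
  Un_cv (fun k => a (S k) / INR (S k)) l /\ forall k, l <= a (S k) / INR (S k).
Proof.
  set (b := fun k => a (S k) / INR (S k)).
  destruct (seq_glb_exists b 0) as [l [Hlow Hgreatest]].
  { intros k. apply Rle_mult_inv_pos; [apply a_nonneg | apply lt_0_INR; lia]. }
  assert (Hl : forall k, l <= b k) by (intros k; apply Hlow; exists k; reflexivity).
  exists l. split; [|exact Hl].
  intros eps Heps.
  assert (Hm : exists m, b m < l + eps / 2).
  { apply NNPP. intros Hno.
    assert (l + eps / 2 <= l); [|lra].
    apply Hgreatest. intros r [k ->]. apply Rnot_lt_le. intros Hk. apply Hno. exists k. exact Hk. }
  destruct Hm as [m Hm].
  destruct (eventually_div_INR_S_lt (INR (S m) * a 1%nat) (eps / 2)) as [N HN].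
  { apply Rmult_le_pos; [apply pos_INR | apply a_nonneg]. }
  { lra. }
  exists N. intros n Hn. unfold Rdist.
  specialize (Hl n). specialize (HN n Hn).
  pose proof (subadditive_ratio_le (S m) (S n) ltac:(lia) ltac:(lia)).
  unfold b in *. apply Rabs_def1; lra.
Qed.

End Subadditive.

Lemma Un_cv_perturb (u v : nat -> R) (C l : R) : 0 <= C ->
  (forall n, Rabs (u n - v n) <= C / INR (S n)) -> Un_cv v l -> Un_cv u l.
Proof.
  intros HC Huv Hv eps Heps.
  destruct (Hv (eps / 2) ltac:(lra)) as [N1 HN1].
  destruct (eventually_div_INR_S_lt C (eps / 2) HC ltac:(lra)) as [N2 HN2].
  exists (max N1 N2). intros n Hn. unfold Rdist in *.
  specialize (HN1 n ltac:(lia)). specialize (HN2 n ltac:(lia)). specialize (Huv n).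
  pose proof (Rabs_triang (u n - v n) (v n - l)) as Htri.
  replace (u n - v n + (v n - l)) with (u n - l) in Htri by ring. lra.
Qed.

Lemma Un_cv_ge_frequently (u : nat -> R) (l c : R) : Un_cv u l ->
  (forall N, exists n, (N <= n)%nat /\ c <= u n) -> c <= l.
Proof.
  intros Hu Hfreq. apply Rnot_lt_le. intros Hlt.
  destruct (Hu (c - l) ltac:(lra)) as [N HN].
  destruct (Hfreq N) as [n [Hn Hc]].
  specialize (HN n Hn). unfold Rdist in HN. apply Rabs_def2 in HN. lra.
Qed.

Section MetricSpace.

Context {X : Type} {d : X -> X -> R} (hm : is_metric d).

Lemma dist_refl (x : X) : d x x = 0.
Proof. apply (proj1 hm). reflexivity. Qed.

Lemma dist_sym (x y : X) : d x y = d y x.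
Proof. apply (proj1 (proj2 hm)). Qed.

Lemma dist_triangle (x y z : X) : d x z <= d x y + d y z.
Proof. apply (proj2 (proj2 hm)). Qed.

Lemma dist_nonneg (x y : X) : 0 <= d x y.
Proof.
  pose proof (dist_triangle x y x) as Htri.
  rewrite dist_refl, (dist_sym y x) in Htri. lra.
Qed.

Lemma dist_preserving_iter (h : X -> X) : dist_preserving d h ->
  forall n, dist_preserving d (Nat.iter n h).
Proof.
  intros hh n; induction n as [|n IH]; intros x y; simpl; [reflexivity|].
  rewrite hh; apply IH.
Qed.

Lemma geodesic_seg_rev (a b : X) (gam : R -> X) : geodesic_seg d a b gam ->
  geodesic_seg d b a (fun t => gam (d a b - t)).
Proof.
  intros [G0 [G1 G2]]. red. rewrite (dist_sym b a). split; [|split].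
  - replace (d a b - 0) with (d a b) by ring. exact G1.
  - replace (d a b - d a b) with 0 by ring. exact G0.
  - intros s t Hs Ht. rewrite G2 by lra. rewrite Rabs_minus_sym. f_equal. ring.
Qed.

Lemma geodesic_seg_image (h : X -> X) (a b : X) (gam : R -> X) :
  dist_preserving d h -> geodesic_seg d a b gam ->
  geodesic_seg d (h a) (h b) (fun t => h (gam t)).
Proof.
  intros hh [G0 [G1 G2]]. red. rewrite hh. split; [|split].
  - rewrite G0; reflexivity.
  - rewrite G1; reflexivity.
  - intros s t Hs Ht. rewrite hh in Hs, Ht |- *. apply G2; assumption.
Qed.

Lemma orbit_dist_subadditive (h : X -> X) : dist_preserving d h ->
  forall x m n, d x (Nat.iter (m + n) h x) <= d x (Nat.iter m h x) + d x (Nat.iter n h x).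
Proof.
  intros hh x m n. rewrite Nat.iter_add.
  rewrite <- (dist_preserving_iter h hh m x (Nat.iter n h x)).
  apply dist_triangle.
Qed.

Lemma orbit_dist_basepoint (h : X -> X) : dist_preserving d h ->
  forall x y n, Rabs (d x (Nat.iter n h x) - d y (Nat.iter n h y)) <= 2 * d x y.
Proof.
  intros hh x y n. pose proof (dist_preserving_iter h hh n x y) as Hn.
  pose proof (dist_triangle x y (Nat.iter n h x)).
  pose proof (dist_triangle y (Nat.iter n h y) (Nat.iter n h x)).
  pose proof (dist_triangle y x (Nat.iter n h y)).
  pose proof (dist_triangle x (Nat.iter n h x) (Nat.iter n h y)).
  rewrite (dist_sym (Nat.iter n h y)) in *. rewrite (dist_sym y x) in *.
  apply Rabs_le. lra.
Qed.

Lemma stable_length_exists (h : X -> X) (x0 : X) : dist_preserving d h ->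
  exists l, stable_length d h l.
Proof.
  intros hh.
  destruct (fekete_subadditive (fun n => d x0 (Nat.iter n h x0)))
    as [l [Hl _]].
  - apply dist_refl.
  - intros n. apply dist_nonneg.
  - apply orbit_dist_subadditive, hh.
  - exists l. intros x.
    apply (Un_cv_perturb _ (fun k => d x0 (Nat.iter (S k) h x0) / INR (S k)) (2 * d x x0));
      [|intros k|exact Hl].
    { pose proof (dist_nonneg x x0). lra. }
    assert (Hk : 0 < / INR (S k)) by (apply Rinv_0_lt_compat, lt_0_INR; lia).
    unfold Rdiv. rewrite <- Rmult_minus_distr_r, Rabs_mult, (Rabs_right (/ _)) by lra.
    apply Rmult_le_compat_r; [lra|]. apply orbit_dist_basepoint, hh.
Qed.

Lemma stable_length_le_displacement (h : X -> X) (l : R) :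
  dist_preserving d h -> stable_length d h l -> forall x, l <= d x (h x).
Proof.
  intros hh Hl x.
  destruct (fekete_subadditive (fun n => d x (Nat.iter n h x)))
    as [l' [Hl' Hinf]].
  - apply dist_refl.
  - intros n. apply dist_nonneg.
  - apply orbit_dist_subadditive, hh.
  - rewrite (UL_sequence _ _ _ (Hl x) Hl').
    specialize (Hinf 0%nat). simpl in Hinf. rewrite Rdiv_1_r in Hinf. exact Hinf.
Qed.

Lemma stable_length_ge_pow2 (h : X -> X) (l c : R) (x : X) : stable_length d h l ->
  (forall p, c * 2 ^ p <= d x (Nat.iter (2 ^ p) h x)) -> c <= l.
Proof.
  intros Hl Hc. apply (Un_cv_ge_frequently _ _ _ (Hl x)). intros N.
  pose proof (Nat.pow_gt_lin_r 2 (S N) ltac:(lia)) as Hbig.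
  exists (2 ^ S N - 1)%nat. split; [lia|].
  replace (S (2 ^ S N - 1)) with (2 ^ S N)%nat by lia.
  rewrite pow_INR. replace (INR 2) with 2 by (simpl; lra).
  assert (Hp : 0 < 2 ^ S N) by (apply pow_lt; lra).
  replace c with (c * 2 ^ S N / 2 ^ S N) by (field; lra).
  unfold Rdiv. apply Rmult_le_compat_r; [left; apply Rinv_0_lt_compat; exact Hp | apply Hc].
Qed.

End MetricSpace.

Lemma iter_pow2_succ {X : Type} (h : X -> X) (p : nat) (y : X) :
  Nat.iter (2 ^ S p) h y = Nat.iter (2 ^ p) h (Nat.iter (2 ^ p) h y).
Proof.
  replace (2 ^ S p)%nat with (2 ^ p + 2 ^ p)%nat by (simpl; lia).
  apply Nat.iter_add.
Qed.

Section Hyperbolic.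

Context {X : Type} {d : X -> X -> R} {delta : R}.
Context (hm : is_metric d) (hgeo : geodesic_space d) (hthin : delta_thin d delta).

Lemma delta_nonneg (x : X) : 0 <= delta.
Proof.
  destruct (hgeo x x) as [gam Hgam].
  pose proof (hthin x x x gam gam Hgam Hgam 0) as T.
  unfold gromov in T. rewrite (dist_refl hm) in T.
  specialize (T ltac:(lra)). rewrite (dist_refl hm) in T. exact T.
Qed.

Lemma displacement_square_ge (h : X -> X) (c : R) : dist_preserving d h -> delta < c ->
  (forall y, c <= d y (h y)) -> forall x, d x (h x) + c - delta <= d x (h (h x)).
Proof.
  intros hh Hc hlow x.
  destruct (hgeo x (h x)) as [gam Hgam].
  pose proof (geodesic_seg_rev hm x (h x) gam Hgam) as Hback.
  pose proof (geodesic_seg_image h x (h x) gam hh Hgam) as Himg.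
  destruct Hgam as [_ [_ Hgam]].
  set (L := d x (h x)) in *.
  set (G := gromov d (h x) x (h (h x))).
  assert (HG : G = L - d x (h (h x)) / 2).
  { unfold G, gromov. rewrite (dist_sym hm (h x) x), hh. fold L. field. }
  assert (HL : 0 <= L) by apply (dist_nonneg hm).
  pose proof (dist_triangle hm x (h x) (h (h x))) as Htri.
  rewrite hh in Htri. fold L in Htri.
  apply Rnot_lt_le. intros Hshort.
  destruct (Rle_or_lt (L / 2) G) as [Hmid | Hmid].
  - pose proof (hthin _ _ _ _ _ Hback Himg (L / 2) ltac:(fold G; lra)) as T.
    cbv beta in T. replace (L - L / 2) with (L / 2) in T by field.
    specialize (hlow (gam (L / 2))). lra.
  - pose proof (hthin _ _ _ _ _ Hback Himg G ltac:(fold G; lra)) as T. cbv beta in T.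
    pose proof (dist_triangle hm (gam (L - G)) (h (gam G)) (h (gam (L - G)))) as T'.
    rewrite hh, Hgam, Rabs_left1 in T' by lra.
    specialize (hlow (gam (L - G))). lra.
Qed.

Section LowerBound.

Variables (g : X -> X) (s : R).
Hypothesis hg : dist_preserving d g.
Hypothesis hlow : forall y, s <= d y (g y).

Lemma displacement_pow2_ge : delta < s ->
  forall p y, 2 ^ p * (s - delta) + delta <= d y (Nat.iter (2 ^ p) g y).
Proof.
  intros Hs p. induction p as [|p IH]; intros y; [simpl; specialize (hlow y); lra|].
  assert (Hp : 0 < 2 ^ p * (s - delta)) by (apply Rmult_lt_0_compat; [apply pow_lt|]; lra).
  rewrite iter_pow2_succ.
  pose proof (displacement_square_ge _ (2 ^ p * (s - delta) + delta)
                (dist_preserving_iter g hg (2 ^ p))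
                ltac:(lra) IH y).
  specialize (IH y). simpl pow. lra.
Qed.

Lemma orbit_dist_pow2_ge : delta < s ->
  forall p x, d x (g x) + (2 ^ p - 1) * (s - delta) <= d x (Nat.iter (2 ^ p) g x).
Proof.
  intros Hs p. induction p as [|p IH]; intros x; [simpl; lra|].
  assert (Hp : 0 < 2 ^ p * (s - delta)) by (apply Rmult_lt_0_compat; [apply pow_lt|]; lra).
  rewrite iter_pow2_succ.
  pose proof (displacement_square_ge _ (2 ^ p * (s - delta) + delta)
                (dist_preserving_iter g hg (2 ^ p))
                ltac:(lra) (displacement_pow2_ge Hs p) x).
  specialize (IH x). simpl pow. lra.
Qed.

Lemma orbit_dist_increasing : 2 * delta < s ->
  forall x n, d x (Nat.iter n g x) < d x (Nat.iter (S n) g x).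
Proof.
  intros Hs x n. pose proof (delta_nonneg x) as hdelta.
  induction n as [|n IH].
  { simpl. rewrite (dist_refl hm). specialize (hlow x). lra. }
  destruct (hgeo x (g x)) as [gam Hgam].
  set (L := d x (g x)).
  pose proof (geodesic_seg_image _ _ _ _ (dist_preserving_iter g hg n)
                (geodesic_seg_rev hm _ _ _ Hgam)) as Hback.
  pose proof (geodesic_seg_image _ _ _ _ (dist_preserving_iter g hg (S n)) Hgam)
    as Hfwd.
  rewrite <- Nat.iter_succ_r in Hback, Hfwd. fold L in Hback.
  set (w := Nat.iter (S n) g x) in *.
  destruct (hgeo w x) as [sig Hsig].
  apply Rnot_le_lt. intros Hturn.
  assert (HL : 0 <= L) by apply (dist_nonneg hm).
  assert (Hwn : d w (Nat.iter n g x) = L).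
  { unfold w. rewrite Nat.iter_succ_r, (dist_preserving_iter g hg). apply (dist_sym hm). }
  assert (Hw2 : d w (Nat.iter (S (S n)) g x) = L).
  { unfold w. rewrite (Nat.iter_succ_r (S n)), (dist_preserving_iter g hg). reflexivity. }
  pose proof (hthin _ _ _ _ _ Hback Hsig (L / 2)) as T1.
  pose proof (hthin _ _ _ _ _ Hsig Hfwd (L / 2)) as T2.
  unfold gromov in T1, T2. cbv beta in T1, T2.
  rewrite Hwn, (dist_sym hm w x), (dist_sym hm (Nat.iter n g x) x) in T1.
  rewrite Hw2, (dist_sym hm w x) in T2.
  replace (L - L / 2) with (L / 2) in T1 by field.
  specialize (T1 ltac:(lra)). specialize (T2 ltac:(lra)).
  set (m := Nat.iter n g (gam (L / 2))) in *.
  change (Nat.iter (S n) g (gam (L / 2))) with (g m) in T2.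
  pose proof (dist_triangle hm m (sig (L / 2)) (g m)).
  specialize (hlow m). lra.
Qed.

End LowerBound.

End Hyperbolic.

Theorem lemma8p15 (X : Type) (d : X -> X -> R) (delta : R)
  (hX : hyperbolic_space d delta)
  (g : X -> X) (hg : isometry d g) (hnt : exists x, g x <> x)
  (s : R) (hs : is_glb (displacements d g) s) :
  (exists l, stable_length d g l /\ l <= s /\ s <= l + delta) /\
  (s > delta ->
     forall (p : nat) (x : X), (1 <= p)%nat ->
       d x (Nat.iter (2 ^ p) g x) >= d x (g x) + (INR (2 ^ p) - 1) * (s - delta)) /\
  (s > 3 * delta ->
     forall (x : X) (n : nat), (1 <= n)%nat ->
       d x (Nat.iter n g x) < d x (Nat.iter (S n) g x)).
Proof.
  destruct hX as [hm [hgeo [_ hthin]]].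
  destruct hg as [hiso _].
  (* Nontriviality of g only serves to provide a base point. *)
  destruct hnt as [x0 _].
  pose proof (delta_nonneg hm hgeo hthin x0) as hdelta.
  assert (hlow : forall y, s <= d y (g y)) by (intros y; apply hs; exists y; reflexivity).
  destruct (stable_length_exists hm g x0 hiso) as [l Hl].
  split; [|split].
  - exists l. split; [exact Hl | split].
    + apply hs. intros r [x ->]. exact (stable_length_le_displacement hm g l hiso Hl x).
    + destruct (Rle_or_lt s delta) as [Hsd | Hsd].
      * assert (0 <= l); [|lra].
        apply (stable_length_ge_pow2 g l 0 x0 Hl). intros p.
        rewrite Rmult_0_l. apply (dist_nonneg hm).
      * assert (s - delta <= l); [|lra].
        apply (stable_length_ge_pow2 g l (s - delta) x0 Hl). intros p.
        pose proof (displacement_pow2_ge hm hgeo hthin g s hiso hlow Hsd p x0). lra.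
  - intros Hsd p x _. rewrite pow_INR. replace (INR 2) with 2 by (simpl; lra).
    apply Rle_ge, (orbit_dist_pow2_ge hm hgeo hthin g s hiso hlow Hsd).
  - intros Hs3 x n _. apply (orbit_dist_increasing hm hgeo hthin g s hiso hlow). lra.
Qed.
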